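(* Let $n > 2k+1$. On every instance, the output set of the algorithm DetMaxFind contains the uncorrupted maximum (and has exactly $2k+1$ elements).
   Context: Model: $n$ elements $x_1,\dots,x_n$, exactly $k$ corrupted (unknown to the algorithm); a tournament (comparison graph) says for each pair which is larger; restricted to uncorrupted elements it is acyclic, while comparisons involving corrupted elements are arbitrary. The uncorrupted maximum is the uncorrupted element larger than every other uncorrupted element. Algorithm DetMaxFind: start with $S=\emptyset$. For $i = 1,\dots,n$: compare $x_i$ with every element currently in $S$ (storing all results), set $S \leftarrow S \cup \{x_i\}$, and if $|S| > 2k+1$ (so $|S| = 2k+2$), choose some element $\bar x \in S$ that is smaller than at least $k+1$ other elements of $S$ (such an element exists by pigeonhole, and is found from the stored comparisons) and remove it from $S$. Output $S$. *)

From mathcomp Require Import all_boot.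
Set Implicit Arguments. Unset Strict Implicit. Unset Printing Implicit Defensive.

(* Elements x_0..x_{n-1} are indexed by 'I_n.
   [T i j] means "the comparison says x_i is larger than x_j". *)

Definition tournament (n : nat) (T : rel 'I_n) : Prop :=
  (forall i, ~~ T i i) /\ (forall i j, i != j -> T i j = ~~ T j i).

Definition acyclic_on (n : nat) (T : rel 'I_n) (U : {set 'I_n}) : Prop :=
  forall (x : 'I_n) (p : seq 'I_n),
    all (fun y => y \in U) (x :: p) -> ~~ cycle T (x :: p).

Definition uncorrupted_max (n : nat) (T : rel 'I_n) (C : {set 'I_n}) (m : 'I_n)
  : Prop :=
  m \notin C /\ forall y, y \notin C -> y != m -> T m y.

(* One iteration of DetMaxFind processing element x: S' is a possible
   resulting set (the removal choice is nondeterministic). *)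
Definition detmax_step (n k : nat) (T : rel 'I_n) (x : 'I_n)
  (S S' : {set 'I_n}) : Prop :=
  let S1 := x |: S in
  if #|S1| > 2 * k + 1 then
    exists2 xb, xb \in S1 &
      (k + 1 <= #|[set y in S1 | T y xb]|) /\ S' = S1 :\ xb
  else S' = S1.

(* A complete run of DetMaxFind: S 0 = empty and S i.+1 arises from S i by
   processing x_i; the output is S n. *)
Definition detmax_run (n k : nat) (T : rel 'I_n) (S : nat -> {set 'I_n}) : Prop :=
  S 0 = set0 /\ forall i : 'I_n, detmax_step k T i (S i) (S i.+1).

From mathcomp Require Import all_boot.
From mathcomp Require Import zify.

Set Implicit Arguments.
Unset Strict Implicit.
Unset Printing Implicit Defensive.

(* Every element beating the uncorrupted maximum is corrupted, so in any set
   the maximum is beaten by at most k elements and is never the one removed,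
   which needs k + 1 beaters. The size of S grows by one per step until it
   reaches 2k + 1, where removals keep it; since n > 2k + 1 that size is hit. *)

Section DetMaxFind.

Variables (n k : nat) (T : rel 'I_n).

Lemma beaters_uncorrupted_max_subset (C : {set 'I_n}) (m : 'I_n)
    (A : {set 'I_n}) :
  tournament T -> uncorrupted_max T C m -> [set y in A | T y m] \subset C.
Proof.
move=> [Tirr Tanti] [_ mmax]; apply/subsetP => y; rewrite inE => /andP [_ Tym].
apply/negPn/negP => yC.
have ym : y != m by apply: contraTneq Tym => ->; rewrite (negbTE (Tirr m)).
by move: (mmax y yC ym); rewrite (Tanti m y) ?Tym // eq_sym.
Qed.

Lemma detmax_step_sub (x : 'I_n) (S S' : {set 'I_n}) :
  detmax_step k T x S S' -> S' \subset x |: S.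
Proof.
rewrite /detmax_step; case: ifP => _ => [[xb _ [_ ->]]|->] //.
exact: subsetDl.
Qed.

Lemma card_detmax_step (x : 'I_n) (S S' : {set 'I_n}) :
  x \notin S -> #|S| <= 2 * k + 1 -> detmax_step k T x S S' ->
  #|S'| = minn #|S|.+1 (2 * k + 1).
Proof.
move=> xS hS; have cardS1 : #|x |: S| = #|S|.+1 by rewrite cardsU1 xS.
rewrite /detmax_step cardS1; case: ifP => hgt.
  move=> [xb xbS [_ ->]]; move: (cardsD1 xb (x |: S)).
  rewrite xbS cardS1 add1n => -[] <-.
  have full : #|S| = 2 * k + 1 by apply/anti_leq; rewrite hS -ltnS.
  by rewrite full; apply/esym/minn_idPr.
by move/negbT: hgt; rewrite -leqNgt => hgt ->; rewrite cardS1; apply/esym/minn_idPl.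
Qed.

Lemma detmax_step_keeps (m : 'I_n) (x : 'I_n) (S S' : {set 'I_n}) :
  (forall A : {set 'I_n}, #|[set y in A | T y m]| <= k) ->
  detmax_step k T x S S' -> m \in x |: S -> m \in S'.
Proof.
move=> few_beaters; rewrite /detmax_step.
case: ifP => _ => [[xb _ [many_beaters ->]] mS|-> //]; rewrite in_setD1 mS andbT.
by apply: contraTneq many_beaters => <-; rewrite -ltnNge addn1 ltnS.
Qed.

Lemma detmax_run_invariant (S : nat -> {set 'I_n}) (m : 'I_n) :
  (forall A : {set 'I_n}, #|[set y in A | T y m]| <= k) ->
  detmax_run k T S -> forall i, i <= n ->
  [/\ S i \subset [set j : 'I_n | j < i], #|S i| = minn i (2 * k + 1)
    & m < i -> m \in S i].
Proof.
move=> few_beaters [S0 step]; elim=> [_|i IH lt_in].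
  by rewrite S0 cards0 sub0set min0n; split.
have [sub_i card_i m_i] := IH (ltnW lt_in).
have step_i := step (Ordinal lt_in).
have fresh : Ordinal lt_in \notin S i.
  by apply/negP => /(subsetP sub_i); rewrite inE ltnn.
split.
- apply: subset_trans (detmax_step_sub step_i) _.
  apply/subsetP => j; rewrite !inE => /orP [/eqP -> //|/(subsetP sub_i)].
  by rewrite inE => /ltnW.
- by rewrite (card_detmax_step fresh _ step_i) card_i; lia.
- move=> lt_mi; apply: (detmax_step_keeps few_beaters step_i).
  move: lt_mi; rewrite ltnS leq_eqVlt => /orP [/eqP e|lt_mi].
    by rewrite (_ : m = Ordinal lt_in) ?setU11 //; apply: val_inj.
  by rewrite in_setU1 m_i ?orbT.
Qed.

End DetMaxFind.

Theorem mainTheorem5 (n k : nat) (T : rel 'I_n) (C : {set 'I_n})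
  (S : nat -> {set 'I_n}) (m : 'I_n) :
  2 * k + 1 < n ->
  #|C| = k ->
  tournament T ->
  acyclic_on T (~: C) ->
  uncorrupted_max T C m ->
  detmax_run k T S ->
  m \in S n /\ #|S n| = 2 * k + 1.
Proof.
move=> lt_n cardC tourT _ mmax run.
have few_beaters (A : {set 'I_n}) : #|[set y in A | T y m]| <= k.
  by rewrite -cardC subset_leq_card // (beaters_uncorrupted_max_subset A tourT mmax).
have [_ card_n m_n] := detmax_run_invariant few_beaters run (leqnn n).
by split; [exact: m_n | rewrite card_n; lia].
Qed.
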